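(* There are absolute constants $c,c_1,c_2>0$ such that the following holds. Let $X,Y$ be a section-pair in which each vertex of $X$ is incident to at most one chord. Let $E$ be a set of chords and let $J\subseteq\mathbb{N}$ be an interval such that the length of every chord in $E$ belongs to $J$. Then there are $k\ge c|E|/|J|$ paths $P_1,\dots,P_k$ in $H(X,Y)$ between $x^{t}$ and $y^{t}$ such that $c_1|J|\le |P_{i+1}|-|P_i|\le c_2|J|$ for every $1\le i\le k-1$.
   Context: A section-pair in a graph $G$ is a pair $X,Y$ of vertex-disjoint paths; the two endpoints of $X$ are designated its top $x^{t}$ and bottom $x^{b}$, and those of $Y$ its top $y^t$ and bottom $y^b$. A chord is an edge of $G$ with one endpoint in $X$ and one in $Y$. $H(X,Y)$ is the graph with vertex set $V(X)\cup V(Y)$ whose edges are the edges of $X$, the edges of $Y$ and the chords. $|P|$ is the number of edges of a path $P$; $d_X(x_1,x_2)$ is the number of edges of the subpath of $X$ between $x_1,x_2$, similarly $d_Y$. The length of a chord $(x,y)$, $x\in X,y\in Y$, is $d_X(x^t,x)+d_Y(y^t,y)$. An interval is a set of consecutive integers and $|J|$ is its number of elements. *)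

From HB Require Import structures.
From mathcomp Require Import all_boot all_order all_algebra.
From mathcomp Require Import reals.
Set Implicit Arguments. Unset Strict Implicit. Unset Printing Implicit Defensive.

Section Defs.
Variable T : finType.

Definition simple_graph (e : rel T) : Prop := symmetric e /\ irreflexive e.

Definition is_path (adj : rel T) (P : seq T) : bool :=
  match P with
  | [::] => false
  | x :: p => path adj x p && uniq P
  end.

Definition plen (P : seq T) : nat := (size P).-1.

Definition seq_edge (s : seq T) (u v : T) : bool :=
  has (fun i => ((nth u s i == u) && (nth u s i.+1 == v)) ||
                ((nth u s i == v) && (nth u s i.+1 == u)))
      (iota 0 (size s).-1).

(* A section-pair X, Y in the graph e: vertex-disjoint paths; each path is
   listed from its top (head) to its bottom (last). *)
Definition section_pair (e : rel T) (X Y : seq T) : Prop :=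
  is_path e X /\ is_path e Y /\ [disjoint X & Y].

Definition chord (e : rel T) (X Y : seq T) (p : T * T) : bool :=
  [&& p.1 \in X, p.2 \in Y & e p.1 p.2].

Definition Hadj (e : rel T) (X Y : seq T) (u v : T) : bool :=
  [|| seq_edge X u v, seq_edge Y u v, chord e X Y (u, v) | chord e X Y (v, u)].

(* length of a chord (x,y): d_X(x^t,x) + d_Y(y^t,y) *)
Definition chord_length (X Y : seq T) (p : T * T) : nat :=
  index p.1 X + index p.2 Y.

End Defs.

(** Sort the chords of E by their endpoints on X: chord t joins the vertex at
    distance ix t from x^t on X to the vertex at distance jx t from y^t on Y, and
    ix is strictly increasing because no vertex of X carries two chords.  A chain
    F of indices t with jx (t+1) < jx t yields a zigzag path from x^t: down X to
    chord t, across, up Y to chord t+1, back across, on down X, ..., and finally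
    through a chord mu up Y to y^t.  Each detour t changes the length by
    gain t = (ix t + jx t) - (ix (t+1) + jx (t+1)) + 2 <= |J| + 1.  With mu the
    first chord whose endpoint on Y is lowest, a backward induction produces two
    chains before mu whose gains telescope to at least |E| - 3|J|, so one of them
    gains at least half of that.  The prefixes of this chain give paths whose
    lengths grow in steps of at most |J| + 1; choosing prefixes greedily yields at
    least |E| / (5|J|) paths with consecutive lengths |J| to 2|J| apart. *)

From HB Require Import structures.
From mathcomp Require Import all_boot all_order all_algebra.
From mathcomp Require Import reals.
From mathcomp Require Import zify lra.
Import Order.TTheory GRing.Theory Num.Theory.

Set Implicit Arguments. Unset Strict Implicit. Unset Printing Implicit Defensive.

Lemma sorted_iota (r : rel nat) m n :
  (forall k, m <= k -> k.+1 < m + n -> r k k.+1) -> sorted r (iota m n).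
Proof.
case: n => //= n; elim: n m => [|n IH] m //= h.
by rewrite h ?IH // => [k hk1 hk2|]; [apply: h|]; lia.
Qed.

Lemma last_map_iota (A : Type) (f : nat -> A) x m n :
  last x [seq f k | k <- iota m n.+1] = f (m + n).
Proof. by rewrite -addn1 iotaD map_cat last_cat. Qed.

Lemma sorted_cat (A : Type) (r : rel A) x s1 s2 :
  sorted r s1 -> sorted r s2 -> r (last x s1) (head x s2) -> sorted r (s1 ++ s2).
Proof.
case: s1 => //= y s1 h1; case: s2 => [|z s2] h2 h12; first by rewrite cats0.
by rewrite cat_path h1 /= h12.
Qed.

Lemma is_path_uniq (T : finType) (adj : rel T) P : is_path adj P -> uniq P.
Proof. by case: P => //= x p /andP[]. Qed.

Lemma sorted_rcons (A : eqType) (r : rel A) s x :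
  sorted r s -> all (r^~ x) s -> sorted r (rcons s x).
Proof.
case: s => // y s hs /allP hall; rewrite /= rcons_path.
apply/andP; split; [exact: hs | exact/hall/mem_last].
Qed.

Lemma first_argmin (f : nat -> nat) n : 0 < n ->
  exists2 m, m < n & (forall t, t < n -> f m <= f t) /\ (forall t, t < m -> f m < f t).
Proof.
elim: n => // n IH _; case: n IH => [|n] IH.
  by exists 0 => //; split=> [[|t] | t].
have [m hm [hle hlt]] := IH isT.
case: (ltnP (f n.+1) (f m)) => h.
  exists n.+1 => //; split=> t ht; last exact/(leq_trans h)/hle.
  case: (ltngtP t n.+1) => [ht' | | ->] //; last lia.
  exact/ltnW/(leq_trans h)/hle.
exists m; first lia.
split=> // t ht; case: (ltngtP t n.+1) => [ht' | | ->] //; [exact: hle | lia].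
Qed.

Definition link (jx : nat -> nat) (t t' : nat) : bool := (t.+1 < t') && (jx t' < jx t.+1).
Definition descent (jx : nat -> nat) (t : nat) : bool := jx t.+1 < jx t.
Definition gain (ix jx : nat -> nat) (t : nat) : int :=
  ((ix t + jx t)%:Z - (ix t.+1 + jx t.+1)%:Z + 2)%R.

Section Zigzag.
Variables (T : finType) (e : rel T) (X Y : seq T) (xt yt : T).

Definition vertex_at (u : nat + nat) : T :=
  match u with inl i => nth xt X i | inr j => nth yt Y j end.

Definition chord_at (i j : nat) : bool :=
  [&& i < size X, j < size Y & e (nth xt X i) (nth yt Y j)].

Definition pos_edge (u v : nat + nat) : bool :=
  match u, v with
  | inl i, inl i' => (i' == i.+1) && (i' < size X)
  | inr j, inr j' => (j == j'.+1) && (j < size Y)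
  | inl i, inr j | inr j, inl i => chord_at i j
  end.

Lemma pos_edge_Hadj u v : pos_edge u v -> Hadj e X Y (vertex_at u) (vertex_at v).
Proof.
rewrite /Hadj /seq_edge /chord /chord_at.
case: u => [i|j]; case: v => [i'|j'] /=.
- case/andP=> /eqP -> hi; apply/orP; left; apply/hasP; exists i.
    by rewrite mem_iota; lia.
  by rewrite (set_nth_default xt) ?(set_nth_default xt _ hi) ?eqxx //; lia.
- by case/and3P=> hi hj he; rewrite !mem_nth ?he ?orbT.
- by case/and3P=> hi hj he; rewrite !mem_nth ?he ?orbT.
- case/andP=> /eqP -> hj; apply/orP; right; apply/orP; left; apply/hasP; exists j'.
    by rewrite mem_iota; lia.
  by rewrite (set_nth_default yt) ?(set_nth_default yt _ hj) ?eqxx ?orbT //; lia.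
Qed.

Definition pos_ok (u : nat + nat) : bool :=
  match u with inl i => i < size X | inr j => j < size Y end.

Lemma vertex_at_inj : uniq X -> uniq Y -> [disjoint X & Y] ->
  {in pos_ok &, injective vertex_at}.
Proof.
move=> uX uY dXY [i|j] [i'|j'] /= hu hv.
- by move/eqP; rewrite nth_uniq // => /eqP ->.
- by move=> h; move: (disjointFr dXY (mem_nth xt hu)); rewrite h mem_nth.
- by move=> h; move: (disjointFr dXY (mem_nth xt hv)); rewrite -h mem_nth.
- by move/eqP; rewrite nth_uniq // => /eqP ->.
Qed.

Definition downX (i i' : nat) : seq (nat + nat) := [seq inl k | k <- iota i (i'.+1 - i)].
Definition upY (j j' : nat) : seq (nat + nat) := [seq inr (j - k) | k <- iota 0 (j.+1 - j')].

Lemma last_downX x i i' : i <= i' -> last x (downX i i') = inl i'.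
Proof. by move=> h; rewrite /downX subSn // last_map_iota; congr inl; lia. Qed.

Lemma head_upY x j j' s : j' <= j -> head x (upY j j' ++ s) = inr j.
Proof. by move=> h; rewrite /upY subSn //= subn0. Qed.

Lemma last_upY x j j' : j' <= j -> last x (upY j j') = inr j'.
Proof.
by move=> h; rewrite /upY subSn // last_map_iota; congr inr; lia.
Qed.

Lemma mem_downX i i' u : i <= i' -> u \in downX i i' -> exists2 k, u = inl k & i <= k <= i'.
Proof. by move=> h /mapP [k hk ->]; exists k => //; move: hk; rewrite mem_iota; lia. Qed.

Lemma mem_upY j j' u : j' <= j -> u \in upY j j' -> exists2 k, u = inr k & j' <= k <= j.
Proof. by move=> h /mapP [k hk ->]; exists (j - k) => //; move: hk; rewrite mem_iota; lia. Qed.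

Lemma uniq_downX i i' : uniq (downX i i').
Proof. by rewrite map_inj_uniq ?iota_uniq // => k k' []. Qed.

Lemma uniq_upY j j' : j' <= j -> uniq (upY j j').
Proof.
move=> h; rewrite map_inj_in_uniq ?iota_uniq // => k k'.
by rewrite !mem_iota => hk hk' [] /eqP; lia.
Qed.

Lemma sorted_downX i i' : i' < size X -> sorted pos_edge (downX i i').
Proof.
by move=> h; rewrite sorted_map; apply: sorted_iota => k hk1 hk2 /=; rewrite eqxx; lia.
Qed.

Lemma sorted_upY j j' : j < size Y -> sorted pos_edge (upY j j').
Proof.
move=> h; rewrite sorted_map; apply: sorted_iota => k hk1 hk2 /=.
by apply/andP; split; [apply/eqP|]; lia.
Qed.

Lemma size_downX i i' : size (downX i i') = i'.+1 - i.
Proof. by rewrite size_map size_iota. Qed.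

Lemma size_upY j j' : size (upY j j') = j.+1 - j'.
Proof. by rewrite size_map size_iota. Qed.

Variables (ix jx : nat -> nat) (mu : nat).
Hypothesis chord_ix_jx : forall t, t <= mu -> chord_at (ix t) (jx t).
Hypothesis ix_lt : forall t t', t < t' <= mu -> ix t < ix t'.

Definition zigzag_chain (F : seq nat) : bool :=
  [&& sorted (link jx) F, all (link jx ^~ mu) F & all (descent jx) F].

Fixpoint zigzag (s : nat) (F : seq nat) : seq (nat + nat) :=
  if F is t :: F' then downX s (ix t) ++ upY (jx t) (jx t.+1) ++ zigzag (ix t.+1) F'
  else downX s (ix mu) ++ upY (jx mu) 0.

Lemma zigzag_chain_lt F : zigzag_chain F -> all (fun t => t.+1 < mu) F.
Proof. by case/and3P=> _ hmu _; apply: sub_all hmu => t /andP[]. Qed.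

Lemma zigzag_chain_cons t F : zigzag_chain (t :: F) ->
  [/\ link jx t (head mu F), jx t.+1 < jx t, t.+1 < mu & zigzag_chain F].
Proof.
case/and3P=> /= hpath /andP[ht hmu] /andP[hd hdF]; have /andP[ltmu _] := ht.
split => //; last by rewrite /zigzag_chain (path_sorted hpath) hmu.
by case: (F) hpath => [|t' F'] //= /andP[].
Qed.

Lemma zigzag_chain_take k F : zigzag_chain F -> zigzag_chain (take k F).
Proof.
case/and3P=> sF hmu hd; rewrite /zigzag_chain take_sorted //=.
by apply/andP; split; apply/allP => t /mem_take; [apply/(allP hmu) | apply/(allP hd)].
Qed.

Lemma zigzag_chain_head F : zigzag_chain F -> head mu F <= mu.
Proof. by case: F => //= t F ch; have /andP[] := zigzag_chain_lt ch; lia. Qed.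

Lemma ix_head_le F : zigzag_chain F -> ix (head mu F) <= ix mu.
Proof.
move/zigzag_chain_head; rewrite leq_eqVlt => /orP[/eqP -> // | h].
by apply/ltnW/ix_lt; lia.
Qed.

Lemma zigzag_chain_ix t F : zigzag_chain (t :: F) -> ix t < ix t.+1 <= ix (head mu F).
Proof.
move=> ch; have [/andP[ht _] _ hmu ch'] := zigzag_chain_cons ch.
have := zigzag_chain_head ch'; rewrite ix_lt /=; last by lia.
by rewrite leq_eqVlt => /orP[/eqP -> | h]; apply/ltnW/ix_lt; lia.
Qed.

Lemma head_zigzag x s F : s <= ix (head mu F) -> head x (zigzag s F) = inl s.
Proof. by case: F => [|t F] hs; rewrite /= /downX subSn. Qed.

Lemma last_zigzag x s F : last x (zigzag s F) = inr 0.
Proof. by elim: F s x => [|t F IH] s x /=; rewrite !last_cat ?IH ?last_upY. Qed.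

Lemma mem_zigzag s F (u : nat + nat) : zigzag_chain F -> s <= ix (head mu F) ->
  u \in zigzag s F ->
  match u with inl k => s <= k <= ix mu | inr k => k <= jx (head mu F) end.
Proof.
elim: F s => [|t F IH] s /= ch hs.
  by rewrite mem_cat => /orP[/(mem_downX hs) | /(mem_upY (leq0n _))] [k -> hk].
have [/andP[_ hj] hd _ ch'] := zigzag_chain_cons ch.
have /andP[hst hsF] := zigzag_chain_ix ch; have hmuX := ix_head_le ch'.
rewrite !mem_cat => /or3P[/(mem_downX hs) | /(mem_upY (ltnW hd)) | /(IH _ ch' hsF)].
- by move=> [k -> hk]; lia.
- by move=> [k -> hk]; lia.
- by clear IH; case: u => k hk; lia.
Qed.

Lemma sorted_zigzag s F :
  zigzag_chain F -> s <= ix (head mu F) -> sorted pos_edge (zigzag s F).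
Proof.
elim: F s => [|t F IH] s /= ch hs.
  have /and3P[hX hY he] := chord_ix_jx (leqnn mu).
  apply: (sorted_cat (x := inl 0)); rewrite ?sorted_downX ?sorted_upY //.
  by rewrite last_downX // -[upY _ _]cats0 head_upY //= /chord_at hX hY.
have [_ hd hmu ch'] := zigzag_chain_cons ch.
have /andP[hst hsF] := zigzag_chain_ix ch.
have /and3P[hX hY he] := chord_ix_jx (ltnW (ltnW hmu)).
have /and3P[hX1 hY1 he1] := chord_ix_jx (ltnW hmu).
apply: (sorted_cat (x := inl 0)); rewrite ?sorted_downX //.
  apply: (sorted_cat (x := inl 0)); rewrite ?sorted_upY ?IH //.
  by rewrite last_upY ?head_zigzag ?(ltnW hd) //= /chord_at hX1 hY1.
by rewrite last_downX ?head_upY ?(ltnW hd) //= /chord_at hX hY.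
Qed.

Lemma uniq_zigzag s F : zigzag_chain F -> s <= ix (head mu F) -> uniq (zigzag s F).
Proof.
elim: F s => [|t F IH] s /= ch hs.
  rewrite cat_uniq uniq_downX uniq_upY // andbT andTb.
  apply/hasPn => u /(mem_upY (leq0n _)) [k -> _].
  by apply/negP => /(mem_downX hs) [].
have [/andP[_ hj] hd _ ch'] := zigzag_chain_cons ch.
have /andP[hst hsF] := zigzag_chain_ix ch.
rewrite cat_uniq uniq_downX cat_uniq uniq_upY ?IH ?(ltnW hd) // andbT andTb.
apply/andP; split; apply/hasPn => u.
  rewrite mem_cat => /orP[/(mem_upY (ltnW hd)) [k -> _] | /(mem_zigzag ch' hsF) hu].
    by apply/negP => /(mem_downX hs) [].
  by apply/negP => /(mem_downX hs) [k ek hk]; move: hu; rewrite ek; lia.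
move=> /(mem_zigzag ch' hsF) hu.
by apply/negP => /(mem_upY (ltnW hd)) [k ek hk]; move: hu; rewrite ek; lia.
Qed.

Lemma size_zigzag s F : zigzag_chain F -> s <= ix (head mu F) ->
  ((size (zigzag s F))%:Z = (ix mu + jx mu + 2)%:Z - s%:Z + \sum_(t <- F) gain ix jx t)%R.
Proof.
elim: F s => [|t F IH] s /= ch hs.
  by rewrite size_cat size_downX size_upY big_nil; lia.
have [_ hd _ ch'] := zigzag_chain_cons ch.
have /andP[hst hsF] := zigzag_chain_ix ch.
rewrite !size_cat size_downX size_upY !PoszD IH // big_cons /gain.
by move: (\sum_(t <- F) _)%R => S; lia.
Qed.

Lemma zigzag_path F : zigzag_chain F ->
  uniq X -> uniq Y -> [disjoint X & Y] -> head xt X = xt -> head yt Y = yt ->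
  let P := map vertex_at (zigzag 0 F) in
  [&& is_path (Hadj e X Y) P, head xt P == xt & last xt P == yt] /\
  ((plen P)%:Z = (ix mu + jx mu + 1)%:Z + \sum_(t <- F) gain ix jx t)%R.
Proof.
move=> ch uX uY dXY hX hY P.
have hs : 0 <= ix (head mu F) by [].
have pos_ok_zigzag : {subset zigzag 0 F <= pos_ok}.
  have /and3P[hX' _ _] := chord_ix_jx (leqnn mu).
  have /and3P[_ hY' _] := chord_ix_jx (zigzag_chain_head ch).
  by move=> u /(mem_zigzag ch hs); rewrite /pos_ok; case: u => k hk; lia.
have hU : uniq P.
  rewrite map_inj_in_uniq ?uniq_zigzag //.
  by move=> u v /pos_ok_zigzag hu /pos_ok_zigzag hv; apply: vertex_at_inj.
have hS : sorted (Hadj e X Y) P.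
  by rewrite sorted_map; apply: sub_sorted (sorted_zigzag ch hs) => u v /pos_edge_Hadj.
have [Z E] : exists Z, zigzag 0 F = inl 0 :: Z.
  by move: (head_zigzag (inr 0) hs); case: (zigzag 0 F) => [|u Z] //= ->; exists Z.
have hl : last (inl 0) Z = inr 0 by have := last_zigzag (inl 0) 0 F; rewrite E.
split.
  rewrite {}/P E in hU hS *; apply/and3P; split.
  - exact/andP.
  - by rewrite /= nth0 hX.
  - by rewrite -[last _ _]/(last (vertex_at (inl 0)) _) last_map hl /= nth0 hY.
rewrite /plen size_map E /=.
have := size_zigzag ch hs; rewrite E /=.
by move: (\sum_(t <- F) _)%R => S; lia.
Qed.

End Zigzag.

Section Chains.
Variables (n a b : nat) (ix jx : nat -> nat).
Hypothesis ix_lt : forall t t', t < t' < n -> ix t < ix t'.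
Hypothesis chord_length_ab : forall t, t < n -> a <= ix t + jx t <= b.

Local Notation link := (link jx).
Local Notation gain := (gain ix jx).

Lemma ix_gap t t' : t <= t' < n -> ix t + t' <= ix t' + t.
Proof.
elim: t' => [|t' IH] h; first by have -> : t = 0 by lia.
have [ht | -> //] : t <= t' \/ t = t'.+1 by lia.
by have := IH ltac:(lia); have := ix_lt (t := t') (t' := t'.+1) ltac:(lia); lia.
Qed.

Lemma two_chains tau : tau.+1 < n -> descent jx tau -> exists F G : seq nat,
  [/\ sorted link F && all (link^~ tau) F, sorted link G, all (descent jx) (F ++ G),
      all (fun s => s < tau) (F ++ G) &
      (tau%:Z + (2 * a + 2)%:Z - b%:Z <=
       \sum_(s <- F) gain s + gain tau + \sum_(s <- G) gain s + (ix tau.+1 + jx tau.+1)%:Z)%R].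
Proof.
elim/ltn_ind: tau => tau IH htn hd.
case: (leqP (jx 0) (jx tau)) => hj0.
  exists [::], [::]; split => //; rewrite !big_nil /gain.
  have := ix_gap (t := 0) (t' := tau) ltac:(lia).
  have := chord_length_ab (t := 0) ltac:(lia).
  have := chord_length_ab (t := tau) ltac:(lia).
  lia.
have tau_pos : 0 < tau by case: (tau) hj0; rewrite ?ltnn.
have ex : exists t, jx t.+1 <= jx tau by exists tau.-1; rewrite prednK.
(* Recurse at the first tp whose successor chord ends on Y no lower than chord
   tau; the two chains exchange roles, tp closing off the old first chain. *)
case: (ex_minnP ex) => tp htp hmin.
have tp_lt : tp < tau by have := hmin tau.-1; rewrite prednK // leqnn => /(_ isT); lia.
have below m : m < tp -> jx tau < jx m.+1.
  by move=> hm; rewrite ltnNge; apply/negP => /hmin; lia.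
have hdp : descent jx tp.
  have : jx tau < jx tp by case: (tp) below => [|tq] hb; [exact: hj0 | exact: hb].
  by rewrite /descent; lia.
have [F0 [G [/andP[sF0 lF0] sG dFG ltFG hsum]]] := IH tp tp_lt ltac:(lia) hdp.
move: dFG ltFG; rewrite !all_cat => /andP[dF0 dG] /andP[ltF0 ltG].
exists G, (rcons F0 tp); split.
- rewrite sG /=; apply/allP => s /(allP ltG) hs.
  by apply/andP; split; [lia | apply: below].
- exact: sorted_rcons.
- by rewrite all_cat all_rcons dG hdp.
- have lt_tau : subpred (fun s => s < tp) (fun s => s < tau) by move=> s /=; lia.
  by rewrite all_cat all_rcons tp_lt (sub_all lt_tau ltG) (sub_all lt_tau ltF0).
rewrite -cats1 big_cat big_seq1 /=.
have := ix_gap (t := tp.+1) (t' := tau) ltac:(lia).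
move: hsum; rewrite /gain.
move: (\sum_(s <- F0) _)%R (\sum_(s <- G) _)%R => S0 S1.
lia.
Qed.

Lemma long_chain : 0 < n -> exists mu F,
  [/\ mu < n, zigzag_chain jx mu F &
      (n%:Z - 2 - 3 * (b%:Z - a%:Z) <= 2 * \sum_(t <- F) gain t)%R].
Proof.
move=> n0; have [mu hmu [hle hlt]] := first_argmin jx n0.
have tail : n.-1 + a <= mu + b.
  have := ix_gap (t := mu) (t' := n.-1) ltac:(lia); have := hle n.-1 ltac:(lia).
  have := chord_length_ab hmu; have := chord_length_ab (t := n.-1) ltac:(lia).
  lia.
exists mu; case: (posnP mu) => mu0.
  by exists [::]; split; rewrite ?big_nil //; lia.
have hd : descent jx mu.-1 by rewrite /descent prednK //; apply: hlt; lia.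
have [F0 [G [/andP[sF0 _] sG dFG ltFG hsum]]] := two_chains (tau := mu.-1) ltac:(lia) hd.
move: dFG ltFG; rewrite !all_cat => /andP[dF0 dG] /andP[ltF0 ltG].
(* Both chains of [two_chains] at mu.-1 can be closed off through mu, since every
   chord before mu ends on Y strictly below chord mu. *)
have chain_mu F : sorted link F -> all (descent jx) F -> all (fun s => s < mu.-1) F ->
    zigzag_chain jx mu F.
  move=> sF dF ltF; rewrite /zigzag_chain sF dF andbT /=.
  by apply: sub_all ltF => s hs; apply/andP; split; [lia | apply: hlt; lia].
exists (if (\sum_(t <- G) gain t <= \sum_(t <- F0) gain t)%R then F0 else G).
split => //; first by case: ifP => _; apply: chain_mu.
have := chord_length_ab (t := mu.-1) ltac:(lia); have := chord_length_ab hmu.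
move: hsum; rewrite /gain prednK //.
case: ifP => [cmp | /negbT cmp]; move: cmp;
  move: (\sum_(t <- F0) _)%R (\sum_(t <- G) _)%R => S0 S1; lia.
Qed.

End Chains.

Lemma greedy_steps (h : nat -> int) (w r : nat) : 0 < w ->
  (forall k, k < r -> (h k.+1 - h k <= w%:Z + 1)%R) ->
  forall k0, k0 <= r -> exists ks : seq nat,
    path (fun k k' => w%:Z <= h k' - h k <= 2 * w%:Z)%R k0 ks /\
    (h r - h k0 + w%:Z <= 2 * w%:Z * (size ks).+1%:Z)%R.
Proof.
move=> w0 hstep k0 hk0; have [d] := ubnP (r - k0).
elim: d k0 hk0 => // d IH k0 hk0 hd.
pose far k := (k0 < k <= r) && (h k0 + w%:Z <= h k)%R.
case: (boolP [exists k : 'I_r.+1, far k]) => [/existsP [k hk] | /existsP none].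
  have ex : exists k, far k by exists k.
  case: (ex_minnP ex) => k1 /andP[/andP[lt01 le1r] far1] min1.
  have prev : (h k1.-1 < h k0 + w%:Z)%R.
    rewrite ltNge; apply/negP => hc.
    have [e|lt] := eqVneq k1.-1 k0; first by move: hc; rewrite e; lia.
    have := min1 k1.-1; rewrite /far hc andbT; lia.
  have := hstep k1.-1 ltac:(lia); rewrite prednK; last by lia.
  have [ks [pks bnd]] := IH k1 le1r ltac:(lia).
  exists (k1 :: ks); split; first by rewrite /= pks andbT; lia.
  by rewrite /=; lia.
exists [::]; split => //.
have [-> | lt] := eqVneq k0 r; first by lia.
have : ~~ far r by apply/negP => hr; apply: none; exists (Ordinal (ltnSn r)).
rewrite /far leqnn andbT negb_and; lia.
Qed.

Section ChordsOfE.
Variables (T : finType) (e : rel T) (X Y : seq T) (E : {set T * T}) (a b : nat) (xt yt : T).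
Hypothesis one_chord : forall x, x \in X -> (#|[set y | chord e X Y (x, y)]| <= 1)%N.
Hypothesis E_chords : forall p, p \in E -> chord e X Y p.
Hypothesis E_length : forall p, p \in E -> (a <= chord_length X Y p <= b)%N.

Definition chords : seq (T * T) := sort (fun p q => index p.1 X <= index q.1 X) (enum E).
Definition cix (t : nat) : nat := index (nth (xt, yt) chords t).1 X.
Definition cjx (t : nat) : nat := index (nth (xt, yt) chords t).2 Y.

Lemma size_chords : size chords = #|E|.
Proof. by rewrite size_sort cardE. Qed.

Lemma nth_chords t : t < #|E| -> nth (xt, yt) chords t \in E.
Proof. by rewrite -size_chords => /(mem_nth (xt, yt)); rewrite mem_sort mem_enum. Qed.

Lemma chord_at_cix t : t < #|E| -> chord_at e X Y xt yt (cix t) (cjx t).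
Proof.
move=> /nth_chords /E_chords /and3P[h1 h2 h3].
by rewrite /chord_at /cix /cjx !index_mem h1 h2 !nth_index.
Qed.

Lemma cix_length t : t < #|E| -> a <= cix t + cjx t <= b.
Proof. by move=> /nth_chords /E_length. Qed.

Lemma cix_lt t t' : t < t' < #|E| -> cix t < cix t'.
Proof.
move=> /andP[lt_tt' lt_t'E]; have lt_tE := ltn_trans lt_tt' lt_t'E.
have le_tt' : cix t <= cix t'.
  have tr : transitive (fun p q : T * T => index p.1 X <= index q.1 X).
    by move=> ? ? ?; apply: leq_trans.
  have sorted_chords : sorted (fun p q : T * T => index p.1 X <= index q.1 X) chords.
    by apply: sort_sorted => p q; apply: leq_total.
  by apply: (sorted_ltn_nth tr (xt, yt) sorted_chords); rewrite ?inE ?size_chords.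
rewrite ltn_neqAle le_tt' andbT; apply/negP => /eqP same_x.
have /E_chords /and3P[p1X p2Y pe] := nth_chords lt_tE.
have /E_chords /and3P[q1X q2Y qe] := nth_chords lt_t'E.
move: same_x; rewrite /cix; set p := nth _ _ t; set q := nth _ _ t' => same_x.
have e1 : p.1 = q.1 by rewrite -(nth_index xt p1X) same_x nth_index.
have e2 : p.2 = q.2.
  apply: (card_le1_eqP (one_chord p1X)); rewrite inE /chord /=.
    by rewrite e1 q1X q2Y qe.
  by rewrite p1X p2Y pe.
have : p = q by case: p q e1 e2 {same_x p1X p2Y pe q1X q2Y qe} => ? ? [? ?] /= -> ->.
rewrite /p /q => /eqP; rewrite nth_uniq ?size_chords ?sort_uniq ?enum_uniq //.
by move/eqP; lia.
Qed.

Hypothesis sp : section_pair e X Y.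
Hypotheses (hxt : head xt X = xt) (hyt : head yt Y = yt).

Lemma chord_paths : exists Ps : seq (seq T),
  [/\ #|E| <= 5 * (b - a).+1 * size Ps,
      {in Ps, forall P, [&& is_path (Hadj e X Y) P, head xt P == xt & last xt P == yt]} &
      forall i, i.+1 < size Ps ->
        plen (nth [::] Ps i) + (b - a).+1 <= plen (nth [::] Ps i.+1)
                                          <= plen (nth [::] Ps i) + 2 * (b - a).+1].
Proof.
have [/is_path_uniq uX [/is_path_uniq uY dXY]] := sp.
case: (posnP #|E|) => [-> | n0]; first by exists [::].
have [mu [F [hmu ch hsum]]] := long_chain cix_lt cix_length n0.
have chord_mu t : t <= mu -> chord_at e X Y xt yt (cix t) (cjx t).
  by move=> ht; apply: chord_at_cix; lia.
have cix_mu t t' : t < t' <= mu -> cix t < cix t' by move=> h; apply: cix_lt; lia.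
set w := (b - a).+1; pose h k := (\sum_(t <- take k F) gain cix cjx t)%R.
have h_step k : k < size F -> (h k.+1 - h k <= w%:Z + 1)%R.
  move=> hk; rewrite /h (take_nth 0 hk) -cats1 big_cat big_seq1 /=.
  have ht : (nth 0 F k).+1 < mu := allP (zigzag_chain_lt ch) _ (mem_nth 0 hk).
  have := cix_length (t := nth 0 F k) ltac:(lia).
  have := cix_length (t := (nth 0 F k).+1) ltac:(lia).
  by rewrite /gain; move: (\sum_(t <- take k F) _)%R => S; lia.
have [ks [pks bnd]] := greedy_steps (h := h) (w := w) (ltn0Sn _) h_step (leq0n _).
pose P k := map (vertex_at X Y xt yt) (zigzag cix cjx mu 0 (take k F)).
have hP k : [&& is_path (Hadj e X Y) (P k), head xt (P k) == xt & last xt (P k) == yt] /\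
    ((plen (P k))%:Z = (cix mu + cjx mu + 1)%:Z + h k)%R.
  exact: (zigzag_path chord_mu cix_mu (zigzag_chain_take k ch) uX uY dXY hxt hyt).
exists [seq P k | k <- 0 :: ks]; split.
- move: bnd hsum; rewrite /h take0 take_size big_nil size_map /=.
  have : w <= w * (size ks).+1 by rewrite leq_pmulr.
  rewrite -mulnA -mulrA -PoszM; move: (w * _)%N (\sum_(t <- F) _)%R => M S; lia.
- by move=> _ /mapP [k _ ->]; case: (hP k).
- move=> i; rewrite size_map => hi; rewrite !(nth_map 0) //; last exact: ltnW.
  have lt_i : i < size ks by [].
  have /andP := (pathP 0 pks) i lt_i.
  set k1 := nth 0 (0 :: ks) i; set k2 := nth 0 ks i.
  have [_ q1] := hP k1; have [_ q2] := hP k2; rewrite [nth _ (0 :: ks) i.+1]/= -/k2.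
  by move: q1 q2; move: (h k1) (h k2) (plen (P k1)) (plen (P k2)) => A B C D; lia.
Qed.

End ChordsOfE.

Local Open Scope ring_scope.

Theorem lemma4p7 (R : realType) :
  exists c c1 c2 : R, [/\ 0 < c, 0 < c1 & 0 < c2] /\
  forall (T : finType) (e : rel T) (X Y : seq T),
    simple_graph e -> section_pair e X Y ->
    (forall x, x \in X -> (#|[set y | chord e X Y (x, y)]| <= 1)%N) ->
    forall (E : {set T * T}) (a b : nat),
      (forall p, p \in E -> chord e X Y p) ->
      (a <= b)%N ->
      (* J = [a, b], |J| = b - a + 1 *)
      (forall p, p \in E -> (a <= chord_length X Y p <= b)%N) ->
      (* x^t and y^t: the tops (first vertices) of X and Y *)
      forall xt yt : T, head xt X = xt -> head yt Y = yt ->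
      let Jsz := ((b - a).+1)%:R : R in
      exists Ps : seq (seq T),
        [/\ c * #|E|%:R / Jsz <= (size Ps)%:R,
            (forall P, P \in Ps ->
               [&& is_path (Hadj e X Y) P, head xt P == xt & last xt P == yt])
          & (forall i, (i.+1 < size Ps)%N ->
               c1 * Jsz <= (plen (nth [::] Ps i.+1))%:R - (plen (nth [::] Ps i))%:R
                        <= c2 * Jsz)].
Proof.
exists (1 / 5), 1, 2; split; first by split; lra.
move=> T e X Y _ sp one E a b hE _ hlen xt yt hxt hyt Jsz.
have [Ps [count paths gaps]] := chord_paths one hE hlen sp hxt hyt.
exists Ps; split => //.
  rewrite /Jsz ler_pdivrMr ?ltr0n // [X in _ <= X]mulrC.
  move: count; rewrite -(ler_nat R) !natrM -mulrA.
  by move: (_%:R * _%:R) => M; lra.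
move=> i /gaps /andP[]; rewrite /Jsz -!(ler_nat R) !natrD !natrM.
by move: (plen _)%:R (plen _)%:R => p q; lra.
Qed.
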